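(* Let $W=\langle \mathcal{D},\mathcal{N},\mathrm{wr},\mathrm{gd}\rangle$ be a (1-safe) DAW-net with reachability graph $\mathit{RG}_W$, and let $\mathit{TS}_{\mathrm{pddl}(W)}$ be the transition system derived from the planning-domain encoding $\mathrm{pddl}(W)$ (as defined in the context). Then $\mathit{RG}_W$ and $\mathit{TS}_{\mathrm{pddl}(W)}$ are trace equivalent.
   Context: **Data model and guards.** A data model is $\mathcal{D}=(\mathcal{V},\Delta,\mathrm{dm},\mathrm{ord})$: $\mathcal{V}$ a set of variables; $\Delta=\{\Delta_1,\dots,\Delta_n\}$ domains (not necessarily disjoint); $\mathrm{dm}:\mathcal{V}\to\Delta$ total surjective, giving each variable its finite domain; $\mathrm{ord}$ a partial function giving, for some domains $\Delta_i$, a partial order $\le_{\Delta_i}$. An assignment is a partial function $\eta$ on $\mathcal{V}$ with $\eta(v)\in\mathrm{dm}(v)$ when defined. Guards: $\Phi ::= \mathit{true}\mid\mathrm{def}(v)\mid t_1=t_2\mid t_1\le t_2\mid\neg\Phi\mid\Phi\wedge\Phi$, $v\in\mathcal{V}$, $t_1,t_2\in\mathcal{V}\cup\bigcup_i\Delta_i$. With $t[\eta]=\eta(t)$ if $t$ is a variable on which $\eta$ is defined and $t$ otherwise: $\mathcal{D},\eta\models\mathit{true}$; $\mathcal{D},\eta\models\mathrm{def}(v)$ iff $\eta(v)$ defined; $\mathcal{D},\eta\models t_1=t_2$ iff $t_1[\eta],t_2[\eta]\notin\mathcal{V}$ and they are equal; $\mathcal{D},\eta\models t_1\le t_2$ iff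 $t_1[\eta],t_2[\eta]\in\Delta_i$ for some $i$ with $\mathrm{ord}(\Delta_i)$ defined and $t_1[\eta]\le_{\Delta_i}t_2[\eta]$; $\neg,\wedge$ classical. **DAW-nets.** Petri net $\mathcal{N}=(P,T,F)$, $F\subseteq(P\times T)\cup(T\times P)$, ${}^\bullet t=\{p\mid(p,t)\in F\}$, $t^\bullet=\{p\mid(t,p)\in F\}$, markings $M:P\to\mathbb{N}$; $\mathcal{N}$ is a workflow net with distinguished places $\mathit{start}$ and $\mathit{sink}$. A DAW-net is $W=\langle\mathcal{D},\mathcal{N},\mathrm{wr},\mathrm{gd}\rangle$ with $\mathrm{wr}(t)$ a partial function from $\mathcal{V}$ such that $\mathrm{wr}(t)(v)\subseteq\mathrm{dm}(v)$, and $\mathrm{gd}(t)$ a guard, for each $t\in T$. A state is $(M,\eta)$. A firing $(M,\eta)\xrightarrow{t}(M',\eta')$ is valid iff $\{p\mid M(p)>0\}\supseteq{}^\bullet t$; $\mathcal{D},\eta\models\mathrm{gd}(t)$; $M'(p)=M(p)-1$ for $p\in{}^\bullet t\setminus t^\bullet$, $M(p)+1$ for $p\in t^\bullet\setminus{}^\bullet t$, $M(p)$ otherwise; $\mathrm{dom}(\eta')=\mathrm{dom}(\eta)\cup\{v\mid\mathrm{wr}(t)(v)\neq\emptyset\}\setminus\{v\mid\mathrm{wr}(t)(v)=\emptyset\}$, with $\eta'(v)\in\mathrm{wr}(t)(v)$ if $v\in\mathrm{dom}(\mathrm{wr}(t))$ and $\eta'(v)=\eta(v)$ otherwise. Initial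 state $(M_s,\eta_s)$: one token in $\mathit{start}$, none elsewhere, $\eta_s$ empty. Standing assumption: $W$ is 1-safe (reachable markings have at most one token per place). $\mathcal{V}'$ denotes the finite set of variables appearing in $W$. **Reachability graph.** $\mathit{RG}_W=(T,\overline{S},\overline{s}_0,\overline{\delta})$, $\overline{s}_0=(M_s,\eta_s)$, $\overline{S}$ and $\overline{\delta}$ the least sets with $\overline{s}_0\in\overline{S}$ such that if $(M,\eta)\in\overline{S}$ and $(M,\eta)\xrightarrow{t}(M',\eta')$ is valid then $(M',\eta')\in\overline{S}$ and $((M,\eta),t,(M',\eta'))\in\overline{\delta}$. **Trace equivalence.** A path is a sequence $s_0\xrightarrow{l_1}\cdots\xrightarrow{l_n}s_n$ ($n\ge0$) from the initial state along transitions. $\mathit{RG}$ and $\mathit{TS}$ are trace equivalent iff there is an injective map $\mathrm{enc}$ from states and transitions of $\mathit{RG}$ to states and labels of $\mathit{TS}$ such that (1) every path $s_0\xrightarrow{t_1}\cdots\xrightarrow{t_n}s_n$ of $\mathit{RG}$ yields a path $\mathrm{enc}(s_0)\xrightarrow{\mathrm{enc}(t_1)}\cdots\xrightarrow{\mathrm{enc}(t_n)}\mathrm{enc}(s_n)$ of $\mathit{TS}$, and (2) for every path $s'_0\xrightarrow{t'_1}\cdots\xrightarrow{t'_n}s'_n$ of $\mathit{TS}$ there is a path $s_0\xrightarrow{t_1}\cdots\xrightarrow{t_n}s_n$ of $\mathit{RG}$ with $\mathrm{enc}(s_i)=s'_i$ and $\mathrm{enc}(t_i)=t'_i$. **State-variable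 planning.** Given objects $B$, state variables $v$ each with a range $\mathrm{Range}(v)\subseteq B$, and rigid relations over $B$, a state is an assignment of each state variable to an element of its range. Preconditions are Boolean combinations of atoms $\mathrm{true}$, $r(z_1,\dots,z_n)$ and $z_1=z_2$, where the $z_i$ are constants, parameters or state variables (state variables evaluated at the current state). An action template $\alpha$ has a head $\mathit{act}(z_1,\dots,z_k)$ with parameters ranging over finite sets, a precondition $\mathrm{pre}(\alpha)$, and effects $\mathrm{eff}(\alpha)$, a set of assignments $v\leftarrow z$; a ground action substitutes constants for the parameters. The transition function $\gamma$ is defined on $(s,a)$ iff $\mathrm{pre}(a)$ holds in $s$, and $\gamma(s,a)=\{(v,w)\mid v\leftarrow w\in\mathrm{eff}(a)\}\cup\{(v,w)\in s\mid v$ is not assigned in $\mathrm{eff}(a)\}$. **The encoding $\mathrm{pddl}(W)$.** State variables: each $v\in\mathcal{V}'$ with range $\mathrm{dm}(v)\cup\{\mathrm{null}\}$, and a Boolean state variable for each $p\in P$. Rigid relations: $\mathrm{ord}=\bigcup_i\{(o,o')\in\Delta_i^2\mid o\le_{\Delta_i}o'\}$ (over $\Delta_i$ with $\mathrm{ord}(\Delta_i)$ defined), and for $t\in T$ and $v\in\mathrm{dom}(\mathrm{wr}(t))$ the unary relation $wr_{t,v}=\mathrm{wr}(t)(v)$ if $\mathrm{wr}(t)(v)\neq\emptyset$ and $wr_{t,v}=\{\mathrm{null}\}$ otherwise. Guard translation $[\cdot]$: $[\mathit{true}]=\mathrm{true}$, $[\mathrm{def}(v)]=\neg(v=\mathrm{null})$,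 $[v=t_2]=\neg(v=\mathrm{null})\wedge(v=t_2)$, $[t_1\le t_2]=\mathrm{ord}(t_1,t_2)$, $[\neg\Phi]=\neg[\Phi]$, $[\Phi_1\wedge\Phi_2]=[\Phi_1]\wedge[\Phi_2]$. For each $t\in T$ with $\mathrm{dom}(\mathrm{wr}(t))=\{v_1,\dots,v_k\}$, the template $\alpha_t$ has head $t(z_{v_1},\dots,z_{v_k})$, precondition $[\mathrm{gd}(t)]\wedge\bigwedge_{i}wr_{t,v_i}(z_{v_i})\wedge\bigwedge_{p\in{}^\bullet t}(p=\mathrm{true})$, and effects $v_i\leftarrow z_{v_i}$ ($1\le i\le k$), $p\leftarrow\mathrm{false}$ for $p\in{}^\bullet t\setminus t^\bullet$, $p\leftarrow\mathrm{true}$ for $p\in t^\bullet$. **Mapping and transition system.** $\Psi(M,\eta)$ is the planning state mapping $v\mapsto\eta(v)$ if $\eta(v)$ is defined and $v\mapsto\mathrm{null}$ otherwise ($v\in\mathcal{V}'$), and $p\mapsto\mathrm{true}$ if $M(p)>0$, $p\mapsto\mathrm{false}$ if $M(p)=0$. $\mathit{TS}_{\mathrm{pddl}(W)}=(T,S_{\mathrm{pddl}},s_0,\delta_{\mathrm{pddl}})$ with $s_0=\Psi(\overline{s}_0)$, $S_{\mathrm{pddl}}$ the least set containing $s_0$ and closed under $s\mapsto\gamma(s,a)$ for ground actions $a$ of the templates $\alpha_t$, and $\delta_{\mathrm{pddl}}=\{(s,t,s')\in S_{\mathrm{pddl}}\times T\times S_{\mathrm{pddl}}\mid\gamma(s,a_t)=s'$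 for some ground action $a_t$ of $\alpha_t\}$. *)

From HB Require Import structures.
From mathcomp Require Import all_boot.
From mathcomp Require Import finmap.

Set Implicit Arguments.
Unset Strict Implicit.
Unset Printing Implicit Defensive.

Local Open Scope fset_scope.
Local Open Scope fmap_scope.

Inductive gterm (V Val : Type) := TVar of V | TConst of Val.

Inductive guard (V Val : Type) :=
| GTrue
| GDef of V
| GEq of gterm V Val & gterm V Val
| GLe of gterm V Val & gterm V Val
| GNot of guard V Val
| GAnd of guard V Val & guard V Val.

Arguments GTrue {V Val}.

Definition gterm_vars (V Val : Type) (t : gterm V Val) : seq V :=
  match t with TVar v => [:: v] | TConst _ => [::] end.
Definition gterm_consts (V Val : Type) (t : gterm V Val) : seq Val :=
  match t with TVar _ => [::] | TConst c => [:: c] end.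

Fixpoint guard_vars (V Val : Type) (g : guard V Val) : seq V :=
  match g with
  | GTrue => [::]
  | GDef v => [:: v]
  | GEq a b | GLe a b => gterm_vars a ++ gterm_vars b
  | GNot g => guard_vars g
  | GAnd g1 g2 => guard_vars g1 ++ guard_vars g2
  end.

Fixpoint guard_consts (V Val : Type) (g : guard V Val) : seq Val :=
  match g with
  | GTrue | GDef _ => [::]
  | GEq a b | GLe a b => gterm_consts a ++ gterm_consts b
  | GNot g => guard_consts g
  | GAnd g1 g2 => guard_consts g1 ++ guard_consts g2
  end.

(*   F ⊆ (P×T) ∪ (T×P) is given by its two halves Fin and Fout         *)
Record daw (V Val : choiceType) (I P T : finType) := Daw {
  Dom   : I -> {fset Val};
  dm    : V -> I;
  ordD  : I -> option (rel Val);
  Fin   : P -> T -> bool;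
  Fout  : T -> P -> bool;
  start : P;
  sink  : P;
  wr    : T -> {fmap V -> {fset Val}};
  gd    : T -> guard V Val
}.

Section DawDefs.
Context {V Val : choiceType} {I P T : finType}.
Implicit Types (W : daw V Val I P T).

Definition is_data_model W : Prop :=
  (forall i : I, exists v : V, dm W v = i) /\
  (forall (i : I) (le : rel Val), ordD W i = Some le ->
     {in Dom W i, reflexive le} /\
     {in Dom W i &, antisymmetric le} /\
     {in Dom W i & &, transitive le}).

Definition pre_set W (t : T) : {set P} := [set p | Fin W p t].
Definition post_set W (t : T) : {set P} := [set p | Fout W t p].

Definition net_edge W : rel (P + T) :=
  fun x y => match x, y with
             | inl p, inr t => Fin W p t
             | inr t, inl p => Fout W t p
             | _, _ => false
             end.

Definition is_workflow_net W : Prop :=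
  (forall t : T, ~~ Fout W t (start W)) /\
  (forall t : T, ~~ Fin W (sink W) t) /\
  (forall x : P + T,
      connect (net_edge W) (inl (start W)) x /\
      connect (net_edge W) x (inl (sink W))).

Definition is_daw W : Prop :=
  is_data_model W /\ is_workflow_net W /\
  (forall (t : T) (v : V) (Sw : {fset Val}),
      (wr W t).[? v] = Some Sw -> Sw `<=` Dom W (dm W v)) /\
  (forall (t : T) (c : Val), c \in guard_consts (gd W t) ->
      exists i : I, c \in Dom W i).

Definition assignment := V -> option Val.
Definition marking := P -> nat.
Definition dstate := (marking * assignment)%type.

Definition tval (eta : assignment) (t : gterm V Val) : V + Val :=
  match t with
  | TVar v => match eta v with Some c => inr c | None => inl v end
  | TConst c => inr c
  end.

Fixpoint sat W (eta : assignment) (g : guard V Val) : Prop :=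
  match g with
  | GTrue => True
  | GDef v => eta v <> None
  | GEq a b => match tval eta a, tval eta b with
               | inr x, inr y => x = y
               | _, _ => False end
  | GLe a b => match tval eta a, tval eta b with
               | inr x, inr y => exists (i : I) (le : rel Val),
                   ordD W i = Some le /\ x \in Dom W i /\ y \in Dom W i /\ le x y
               | _, _ => False end
  | GNot g => ~ sat W eta g
  | GAnd g1 g2 => sat W eta g1 /\ sat W eta g2
  end.

Definition fire W (s : dstate) (t : T) (s' : dstate) : Prop :=
  let: (M, eta) := s in let: (M', eta') := s' in
  (forall p, p \in pre_set W t -> 0 < M p) /\
  sat W eta (gd W t) /\
  (forall p, M' p =
     if p \in pre_set W t :\: post_set W t then (M p - 1)%N
     else if p \in post_set W t :\: pre_set W t then (M p + 1)%N
     else M p) /\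
  (forall v, match (wr W t).[? v] with
             | Some Sw => if Sw == fset0 then eta' v = None
                         else exists x, eta' v = Some x /\ x \in Sw
             | None => eta' v = eta v
             end).

Definition init_dstate W : dstate := (fun p => if p == start W then 1 else 0,
                                      fun _ => None).

Inductive rg_reach W : dstate -> Prop :=
| rg_init : rg_reach W (init_dstate W)
| rg_step s t s' : rg_reach W s -> fire W s t s' -> rg_reach W s'.

Definition rg_delta W (s : dstate) (t : T) (s' : dstate) : Prop :=
  rg_reach W s /\ fire W s t s'.

Definition one_safe W : Prop :=
  forall s, rg_reach W s -> forall p, s.1 p <= 1.

Definition Vp W : {fset V} :=
  [fset v | v in flatten [seq (domf (wr W t) : seq V) ++ guard_vars (gd W t)
                        | t <- enum T]].

(* planning state: each v ∈ V' ↦ an object of dm(v) ∪ {null} (null = None),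
   each place p ↦ a Boolean *)
Definition pstate W := ({ffun Vp W -> option Val} * {ffun P -> bool})%type.

Definition pvar W (s : pstate W) (v : V) : option Val :=
  match insub v with Some x => s.1 x | None => None end.

(* precondition language: terms are state variables, constants (objects:
   values or null) and parameters z_v *)
Inductive pterm := PVar of V | PConst of option Val | PParam of V.

Inductive pform :=
| PTrue
| PEq of pterm & pterm
| POrd of pterm & pterm
| PWr of T & V & pterm
| PPlace of P
| PNot of pform
| PAnd of pform & pform.

Definition ord_rel W (o o' : option Val) : Prop :=
  match o, o' with
  | Some x, Some y => exists (i : I) (le : rel Val),
      ordD W i = Some le /\ x \in Dom W i /\ y \in Dom W i /\ le x y
  | _, _ => False
  end.

Definition wr_rel W (t : T) (v : V) (o : option Val) : Prop :=
  match (wr W t).[? v] with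
  | Some Sw => if Sw == fset0 then o = None else exists x, o = Some x /\ x \in Sw
  | None => False
  end.

Definition peval W (s : pstate W) (z : V -> option Val) (a : pterm) : option Val :=
  match a with PVar v => pvar s v | PConst o => o | PParam v => z v end.

Fixpoint psat W (s : pstate W) (z : V -> option Val) (f : pform) : Prop :=
  match f with
  | PTrue => True
  | PEq a b => peval s z a = peval s z b
  | POrd a b => ord_rel W (peval s z a) (peval s z b)
  | PWr t v a => wr_rel W t v (peval s z a)
  | PPlace p => s.2 p = true
  | PNot f => ~ psat s z f
  | PAnd f g => psat s z f /\ psat s z g
  end.

Definition tr_term (a : gterm V Val) : pterm :=
  match a with TVar v => PVar v | TConst c => PConst (Some c) end.

Fixpoint tr_guard (g : guard V Val) : pform :=
  match g with
  | GTrue => PTrue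
  | GDef v => PNot (PEq (PVar v) (PConst None))
  | GEq a b => PAnd (PNot (PEq (tr_term a) (PConst None)))
                    (PEq (tr_term a) (tr_term b))
  | GLe a b => POrd (tr_term a) (tr_term b)
  | GNot g => PNot (tr_guard g)
  | GAnd g1 g2 => PAnd (tr_guard g1) (tr_guard g2)
  end.

Definition big_and (fs : seq pform) : pform := foldr PAnd PTrue fs.

Definition pre_action W (t : T) : pform :=
  PAnd (tr_guard (gd W t))
   (PAnd (big_and [seq PWr t v (PParam v) | v <- (domf (wr W t) : seq V)])
         (big_and [seq PPlace p | p <- enum (pre_set W t)])).

Definition apply_eff W (t : T) (z : V -> option Val) (s : pstate W) : pstate W :=
  ([ffun x : Vp W => if val x \in domf (wr W t) then z (val x) else s.1 x],
   [ffun p : P => if p \in pre_set W t :\: post_set W t then false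
                  else if p \in post_set W t then true
                  else s.2 p]).

(* γ(s, a) = s'  for the ground action a = α_t[z] *)
Definition gamma_is W (s : pstate W) (t : T) (z : V -> option Val)
  (s' : pstate W) : Prop :=
  psat s z (pre_action W t) /\ apply_eff t z s = s'.

Definition Psi W (s : dstate) : pstate W :=
  ([ffun x : Vp W => s.2 (val x)], [ffun p : P => 0 < s.1 p]).

Inductive ts_reach W : pstate W -> Prop :=
| ts_init : ts_reach (Psi W (init_dstate W))
| ts_step s t z s' : ts_reach s -> gamma_is s t z s' -> ts_reach s'.

Definition ts_delta W (s : pstate W) (t : T) (s' : pstate W) : Prop :=
  ts_reach s /\ ts_reach s' /\ exists z, gamma_is s t z s'.

End DawDefs.

Fixpoint steps (S L : Type) (d : S -> L -> S -> Prop) (s : S)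
  (ss : seq (L * S)) : Prop :=
  match ss with
  | [::] => True
  | (l, s') :: rest => d s l s' /\ steps d s' rest
  end.

Definition is_path (S L : Type) (init : S) (d : S -> L -> S -> Prop)
  (s0 : S) (ss : seq (L * S)) : Prop :=
  s0 = init /\ steps d s0 ss.

Definition trace_equiv (SR LR ST LT : Type)
  (reachR : SR -> Prop) (initR : SR) (dR : SR -> LR -> SR -> Prop)
  (initT : ST) (dT : ST -> LT -> ST -> Prop) : Prop :=
  exists (encS : SR -> ST) (encL : LR -> LT),
    (forall x y, reachR x -> reachR y -> encS x = encS y -> x = y) /\
    injective encL /\
    (forall s0 ss, is_path initR dR s0 ss ->
       is_path initT dT (encS s0) [seq (encL p.1, encS p.2) | p <- ss]) /\
    (forall s0' ss', is_path initT dT s0' ss' ->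
       exists s0 ss, is_path initR dR s0 ss /\ encS s0 = s0' /\
         [seq (encL p.1, encS p.2) | p <- ss] = ss').

From Pilot Require Import Defs.
From HB Require Import structures.
From mathcomp Require Import all_boot finmap.
From Stdlib Require Import FunctionalExtensionality.

(* Ψ is a step-by-step correspondence between reachable DAW states and
   planning states.  Guards and their translations agree as soon as the
   planning state agrees with the assignment on the guard variables (null
   playing the role of "undefined"); a firing that writes the assignment η'
   is the ground action whose parameters are η', and conversely the ground
   action with parameters z is the firing that writes z on dom(wr t) and
   keeps η elsewhere.  1-safety makes the marking determined by its support,
   so Boolean places track it exactly; variables outside V' are never
   written, hence stay undefined, which makes Ψ injective on reachable
   states. *)

Set Implicit Arguments.
Unset Strict Implicit.
Unset Printing Implicit Defensive.

Local Open Scope fset_scope.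
Local Open Scope fmap_scope.

Section TraceEquivalence.

Variables (SR LR ST LT : Type).
Variables (reachR : SR -> Prop) (initR : SR) (dR : SR -> LR -> SR -> Prop).
Variables (initT : ST) (dT : ST -> LT -> ST -> Prop).
Variables (encS : SR -> ST) (encL : LR -> LT).

Hypothesis reach_init : reachR initR.
Hypothesis reach_step : forall s l s', dR s l s' -> reachR s'.
Hypothesis encS_init : encS initR = initT.
Hypothesis encS_inj :
  forall x y, reachR x -> reachR y -> encS x = encS y -> x = y.
Hypothesis encL_inj : injective encL.
Hypothesis enc_step :
  forall s l s', reachR s -> dR s l s' -> dT (encS s) (encL l) (encS s').
Hypothesis dec_step :
  forall s l' s'', reachR s -> dT (encS s) l' s'' ->
  exists l s', [/\ dR s l s', encL l = l' & encS s' = s''].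

Let enc_seq (ss : seq (LR * SR)) : seq (LT * ST) :=
  [seq (encL p.1, encS p.2) | p <- ss].

Lemma steps_enc s ss :
  reachR s -> steps dR s ss -> steps dT (encS s) (enc_seq ss).
Proof.
elim: ss s => [|[l s'] ss IH] s //= reach_s [step_s steps_s'].
by split; [exact: enc_step | exact: IH (reach_step step_s) steps_s'].
Qed.

Lemma steps_dec s ss' :
  reachR s -> steps dT (encS s) ss' ->
  exists2 ss, steps dR s ss & enc_seq ss = ss'.
Proof.
elim: ss' s => [|[l' s''] ss' IH] s reach_s /=; first by exists [::].
case=> /(dec_step reach_s) [l [s' [step_s <- <-]]] steps_s'.
have [ss steps_ss <-] := IH s' (reach_step step_s) steps_s'.
by exists ((l, s') :: ss).
Qed.

Lemma trace_equiv_of_step_correspondence :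
  trace_equiv reachR initR dR initT dT.
Proof.
exists encS, encL; split=> //; split=> //; split.
- move=> s0 ss [s0E steps_ss]; rewrite s0E in steps_ss *.
  by split; [exact: encS_init | exact: steps_enc].
- move=> s0' ss' [s0'E steps_ss']; rewrite s0'E -encS_init in steps_ss' *.
  have [ss steps_ss <-] := steps_dec reach_init steps_ss'.
  by exists initR, ss.
Qed.

End TraceEquivalence.

Section PddlEncoding.

Variables (V Val : choiceType) (I P T : finType) (W : daw V Val I P T).

Definition fire_marking (t : T) (M : P -> nat) : P -> nat := fun p =>
  if p \in pre_set W t :\: post_set W t then (M p - 1)%N
  else if p \in post_set W t :\: pre_set W t then (M p + 1)%N
  else M p.

Definition update_assignment (t : T) (z eta : V -> option Val) :
    V -> option Val := fun v => if v \in domf (wr W t) then z v else eta v.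

Lemma mem_Vp v t :
  v \in (domf (wr W t) : seq V) ++ guard_vars (gd W t) -> v \in Vp W.
Proof.
by move=> v_t; rewrite inE; apply/flatten_mapP; exists t; rewrite ?mem_enum.
Qed.

Lemma mem_Vp_wr v t : v \in domf (wr W t) -> v \in Vp W.
Proof. by move=> v_wr; apply: (@mem_Vp v t); rewrite mem_cat v_wr. Qed.

Lemma mem_Vp_gd v t : v \in guard_vars (gd W t) -> v \in Vp W.
Proof. by move=> v_gd; apply: (@mem_Vp v t); rewrite mem_cat v_gd orbT. Qed.

Lemma rg_reach_undef s v : rg_reach W s -> v \notin Vp W -> s.2 v = None.
Proof.
move=> reach_s vNVp; elim: reach_s => // [[M eta]] t [M' eta'] _ /= IH.
case=> _ [_ [_ /(_ v)]].
by rewrite not_fnd ?(contra (@mem_Vp_wr v t) vNVp) //= => ->.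
Qed.

Lemma pvar_Psi s v : v \in Vp W -> pvar (Psi W s) v = s.2 v.
Proof. by move=> v_Vp; rewrite /pvar insubT /= ffunE. Qed.

Section GuardTranslation.

Variables (ps : pstate W) (z eta : V -> option Val).

Lemma peval_tr_term a :
  {in gterm_vars a, forall v, pvar ps v = eta v} ->
  peval ps z (tr_term a) =
  if Defs.tval eta a is inr x then Some x else None.
Proof.
by case: a => [v|c] //= agree; rewrite agree ?mem_seq1 //; case: (eta v).
Qed.

Lemma sat_tr_guard g :
  {in guard_vars g, forall v, pvar ps v = eta v} ->
  sat W eta g <-> psat ps z (tr_guard g).
Proof.
elim: g => [|v|a b|a b|g IH|g1 IH1 g2 IH2] /= agree.
- by [].
- by rewrite agree ?mem_seq1.
- rewrite !peval_tr_term => [|v v_b|v v_a];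
    try by apply: agree; rewrite mem_cat ?v_a ?v_b ?orbT.
  by case: (Defs.tval eta a) => x; case: (Defs.tval eta b) => y;
     split=> [|[]] // => [-> //|_ []].
- rewrite /ord_rel !peval_tr_term => [|v v_b|v v_a];
    try by apply: agree; rewrite mem_cat ?v_a ?v_b ?orbT.
  by case: (Defs.tval eta a) => x; case: (Defs.tval eta b).
- by rewrite IH.
- by rewrite IH1 ?IH2 // => v v_g; apply: agree; rewrite mem_cat v_g ?orbT.
Qed.

Lemma psat_big_and_map (A : eqType) (F : A -> pform) (l : seq A) :
  psat ps z (big_and [seq F x | x <- l]) <-> {in l, forall x, psat ps z (F x)}.
Proof.
elim: l => [|a l IH] /=; first by [].
rewrite IH; split=> [[Fa Fl] x|Fal].
  by rewrite inE => /predU1P [->|/Fl].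
by split=> [|x x_l]; apply: Fal; rewrite inE ?eqxx ?x_l ?orbT.
Qed.

End GuardTranslation.

Lemma pre_action_PsiP M eta t z :
  psat (Psi W (M, eta)) z (pre_action W t) <->
  [/\ sat W eta (gd W t),
      {in domf (wr W t), forall v, wr_rel W t v (z v)} &
      {in pre_set W t, forall p, 0 < M p}].
Proof.
rewrite /= !psat_big_and_map -(sat_tr_guard z (eta := eta)); last first.
  by move=> v v_gd; rewrite pvar_Psi //; exact: mem_Vp_gd v_gd.
split=> [[gd_ok [wr_ok pre_ok]]|[gd_ok wr_ok pre_ok]].
  by split=> // p; move/(_ p): pre_ok; rewrite mem_enum /= ffunE; apply.
split=> //; split=> [v /wr_ok //|p]; rewrite mem_enum /= ffunE; exact: pre_ok.
Qed.

(* By 1-safety a place of pre(t) \ post(t) holds exactly one token, so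
   firing t empties it. *)
Lemma apply_eff_Psi M eta t z :
  {in pre_set W t, forall p, 0 < M p} -> (forall p, M p <= 1) ->
  apply_eff t z (Psi W (M, eta)) =
  Psi W (fire_marking t M, update_assignment t z eta).
Proof.
move=> pre_ok safe; congr pair; apply/ffunP => x; rewrite !ffunE //=.
rewrite /fire_marking; case: ifP => [_|_].
  by case: (M x) (safe x) => [|[]].
rewrite in_setD; case: (x \in post_set W t); last by rewrite andbF.
by rewrite andbT; case: ifP => [_|/negbFE/pre_ok ->]; rewrite ?addn1.
Qed.

Lemma fire_gamma_Psi s t s' :
  (forall p, s.1 p <= 1) -> fire W s t s' ->
  gamma_is (Psi W s) t s'.2 (Psi W s').
Proof.
case: s s' => M eta [M' eta'] /= safe [pre_ok [gd_ok [M'E wr_ok]]].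
have {}M'E : M' = fire_marking t M by apply: functional_extensionality.
have eta'E : update_assignment t eta' eta = eta'.
  apply: functional_extensionality => v; rewrite /update_assignment.
  by case: ifP => // vNwr; move: (wr_ok v); rewrite not_fnd ?vNwr.
split; last by rewrite apply_eff_Psi // M'E eta'E.
apply/pre_action_PsiP; split=> // v v_wr.
by move: (wr_ok v); rewrite /wr_rel in_fnd.
Qed.

Lemma gamma_Psi_fire s t z ps' :
  (forall p, s.1 p <= 1) -> gamma_is (Psi W s) t z ps' ->
  exists2 s', fire W s t s' & Psi W s' = ps'.
Proof.
case: s => M eta /= safe [/pre_action_PsiP [gd_ok wr_ok pre_ok] <-].
exists (fire_marking t M, update_assignment t z eta).
  split=> //; split=> //; split=> // v; rewrite /update_assignment.
  case: fndP => [v_wr|//].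
  by move: (wr_ok v v_wr); rewrite /wr_rel in_fnd.
by rewrite apply_eff_Psi.
Qed.

Lemma Psi_inj_reach x y :
  one_safe W -> rg_reach W x -> rg_reach W y -> Psi W x = Psi W y -> x = y.
Proof.
case: x y => M eta [M' eta'] safe reach_x reach_y [etaE ME].
congr pair; apply: functional_extensionality.
- move=> p; move: (safe _ reach_x p) (safe _ reach_y p) => /=.
  have /= := congr1 (fun m : {ffun P -> bool} => m p) ME; rewrite !ffunE.
  by case: (M p) => [|[]]; case: (M' p) => [|[]].
- move=> v; case v_Vp: (v \in Vp W).
    have := congr1 (fun a : {ffun Vp W -> option Val} => a [` v_Vp]) etaE.
    by rewrite !ffunE.
  move: (rg_reach_undef (v := v) reach_x) (rg_reach_undef (v := v) reach_y).
  by rewrite v_Vp /= => -> // ->.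
Qed.

Lemma rg_reach_ts_reach s : one_safe W -> rg_reach W s -> ts_reach (Psi W s).
Proof.
move=> safe; elim=> [|s0 t s1 reach_s0 IH fire_t]; first exact: ts_init.
exact: ts_step IH (fire_gamma_Psi (safe _ reach_s0) fire_t).
Qed.

End PddlEncoding.

Theorem mainTheorem2 (V Val : choiceType) (I P T : finType)
  (W : daw V Val I P T) :
  is_daw W -> one_safe W ->
  trace_equiv (rg_reach W) (init_dstate W) (rg_delta W)
              (Psi W (init_dstate W)) (@ts_delta _ _ _ _ _ W).
Proof.
move=> _ safe.
apply: (@trace_equiv_of_step_correspondence _ _ _ _ _ _ _ _ _ (Psi W) id).
- exact: rg_init.
- by move=> s t s' [reach_s fire_t]; exact: rg_step reach_s fire_t.
- by [].
- by move=> x y; exact: Psi_inj_reach.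
- by [].
- move=> s t s' reach_s [_ fire_t].
  split; first exact: rg_reach_ts_reach.
  split; first exact: rg_reach_ts_reach (rg_step reach_s fire_t).
  by exists s'.2; exact: fire_gamma_Psi (safe _ reach_s) fire_t.
- move=> s t ps' reach_s [_ [_ [z gamma_t]]].
  have [s' fire_t <-] := gamma_Psi_fire (safe _ reach_s) gamma_t.
  by exists t, s'.
Qed.
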